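(* Under the same setting, let $\bm u_0^m,\bm u_1^m\in\mathbb R^d$, $\eta_0^m,\eta_1^m>0$, $\alpha\in[0,1]$, $\lambda_{ij}=\dfrac{\Delta t S_{ij}}{1+\alpha\Delta t(S_{ij}+S_{ji})}$, and assume either $\Delta t S_{01},\Delta t S_{10}\le 1$ or $\alpha=1$. Define $\eta_i^{n+1}$ by $\eta_0^{n+1}=(1-\lambda_{01})\eta_0^m+\lambda_{10}\eta_1^m$, $\eta_1^{n+1}=(1-\lambda_{10})\eta_1^m+\lambda_{01}\eta_0^m$, momenta $\bm F_0^{n+1}=(1-\lambda_{01})\eta_0^m\bm u_0^m+\lambda_{10}\eta_1^m\bm u_1^m$, $\bm F_1^{n+1}=(1-\lambda_{10})\eta_1^m\bm u_1^m+\lambda_{01}\eta_0^m\bm u_0^m$, and $\bm u_i^{n+1}=\bm F_i^{n+1}/\eta_i^{n+1}$ (assuming $\eta_i^{n+1}>0$). Then total momentum is conserved and the total kinetic energy does not increase: $$\sum_{i=0}^1\tfrac12\eta_i^{n+1}|\bm u_i^{n+1}|^2\le\sum_{i=0}^1\tfrac12\eta_i^m|\bm u_i^m|^2.$$ More precisely, the kinetic energy decreases by $\Delta K=\tfrac12\mu\,|\bm u_0^m-\bm u_1^m|^2\ge 0$, where $$\mu=\frac{\eta_0^m\eta_1^m\left[(1-\lambda_{01})\lambda_{01}\eta_0^m+(1-\lambda_{10})\lambda_{10}\eta_1^m\right]}{\left[\lambda_{01}\eta_0^m+(1-\lambda_{10})\eta_1^m\right]\left[\lambda_{10}\eta_1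^m+(1-\lambda_{01})\eta_0^m\right]}.$$
   Context: ''Method 2'' (mass-weighted) momentum transfers for a two-fluid system (fluids 0 and 1), with the same implicitness weight $\alpha$ for mass and momentum transfers. $\eta_i$ is the mass per unit volume of fluid $i$, $\bm u_i$ its velocity, $S_{ij}\ge0$ the mass transfer rate from fluid $i$ to fluid $j$, $\Delta t$ the timestep; superscript $m$ denotes values before the transfer step, $n+1$ after. The kinetic energy of the two-fluid system is $\sum_i \frac12\eta_i|\bm u_i|^2$. *)

From HB Require Import structures.
From mathcomp Require Import all_boot all_order all_algebra.
Set Implicit Arguments. Unset Strict Implicit. Unset Printing Implicit Defensive.
Import Order.TTheory GRing.Theory Num.Theory.
Local Open Scope ring_scope.

Definition sqnorm (R : realFieldType) (d : nat) (u : 'rV[R]_d) : R :=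
  \sum_(i < d) u ord0 i ^+ 2.

Definition lam (R : realFieldType) (dt alpha Sij Sji : R) : R :=
  dt * Sij / (1 + alpha * dt * (Sij + Sji)).

Definition kinE (R : realFieldType) (d : nat) (e0 e1 : R) (u0 u1 : 'rV[R]_d) : R :=
  2^-1 * e0 * sqnorm u0 + 2^-1 * e1 * sqnorm u1.

From HB Require Import structures.
From mathcomp Require Import all_boot all_order all_algebra.
From mathcomp Require Import ring lra.
Import Order.TTheory GRing.Theory Num.Theory.
Local Open Scope ring_scope.

(* Write p = (1 - l01) eta0, q = l10 eta1, r = l01 eta0 and
   s = (1 - l10) eta1 for the masses that end up in fluid 0 (p from fluid 0,
   q from fluid 1) and in fluid 1 (r from fluid 0, s from fluid 1).  Each new
   velocity is the mass-weighted average [mix] of the old ones, and averaging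
   two velocities u, v with masses p, q obeys the mixing identity
       (p + q) |(p u + q v)/(p + q)|^2 = p |u|^2 + q |v|^2 - m(p,q) |u - v|^2
   with the reduced mass m(p,q) = pq/(p+q) ([mix_loss]).  Summing it over both
   fluids and using p + r = eta0, q + s = eta1, the kinetic energy drops by
   1/2 (m(p,q) + m(s,r)) |u0 - u1|^2, and this coefficient is the paper's mu
   ([mu_split], a rational-function identity).  Since the transfer fractions
   lie in [0, 1] ([lam_bounds]), all four masses are nonnegative, so mu >= 0.
   Momentum conservation holds because (p + q) times the average is p u + q v
   ([mix_momentum]). *)

Lemma lam_bounds {R : realFieldType} (dt alpha Sij Sji : R) :
  0 < dt -> 0 <= Sij -> 0 <= Sji -> 0 <= alpha <= 1 ->
  (dt * Sij <= 1 \/ alpha = 1) ->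
  0 <= lam dt alpha Sij Sji <= 1.
Proof.
move=> hdt hij hji /andP[ha0 ha1] hor; rewrite /lam.
have hdt0 := ltW hdt.
have hS : 0 <= alpha * dt * (Sij + Sji) by rewrite !mulr_ge0 ?addr_ge0.
have hD : 0 < 1 + alpha * dt * (Sij + Sji) by lra.
have hij' : 0 <= dt * Sij by rewrite mulr_ge0.
have hji' : 0 <= dt * Sji by rewrite mulr_ge0.
apply/andP; split; first by rewrite divr_ge0 // ltW.
rewrite ler_pdivrMr // mul1r.
by case: hor => [h|->]; rewrite ?mul1r ?mulrDr; lra.
Qed.

(* Energy coefficient lost when masses p and q are mixed (the reduced mass). *)
Definition mix_loss {R : fieldType} (p q : R) : R := p * q / (p + q).

Lemma mix_loss_ge0 {R : realFieldType} (p q : R) :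
  0 <= p -> 0 <= q -> 0 <= mix_loss p q.
Proof. by move=> hp hq; rewrite divr_ge0 ?mulr_ge0 ?addr_ge0. Qed.

Section Mixing.
Context {R : realFieldType} {d : nat}.

Lemma sqnorm_ge0 (u : 'rV[R]_d) : 0 <= sqnorm u.
Proof. by apply: sumr_ge0 => i _; apply: sqr_ge0. Qed.

Lemma sqnormN (u : 'rV[R]_d) : sqnorm (- u) = sqnorm u.
Proof. by apply: eq_bigr => i _; rewrite mxE sqrrN. Qed.

Definition mix (p q : R) (u v : 'rV[R]_d) : 'rV[R]_d :=
  (p + q)^-1 *: (p *: u + q *: v).

Lemma mix_momentum (p q : R) (u v : 'rV[R]_d) :
  p + q != 0 -> (p + q) *: mix p q u v = p *: u + q *: v.
Proof. by move=> hpq; rewrite /mix scalerA mulfV // scale1r. Qed.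

Lemma mix_energy (p q : R) (u v : 'rV[R]_d) :
  p + q != 0 ->
  (p + q) * sqnorm (mix p q u v)
    = p * sqnorm u + q * sqnorm v - mix_loss p q * sqnorm (u - v).
Proof.
move=> hpq; rewrite /sqnorm /mix_loss !mulr_sumr -big_split -sumrB /=.
by apply: eq_bigr => i _; rewrite !mxE; field.
Qed.

End Mixing.

Lemma mu_split {R : fieldType} (l01 l10 e0 e1 : R) :
  (1 - l01) * e0 + l10 * e1 != 0 -> (1 - l10) * e1 + l01 * e0 != 0 ->
  e0 * e1 * ((1 - l01) * l01 * e0 + (1 - l10) * l10 * e1)
    / ((l01 * e0 + (1 - l10) * e1) * (l10 * e1 + (1 - l01) * e0))
  = mix_loss ((1 - l01) * e0) (l10 * e1) + mix_loss ((1 - l10) * e1) (l01 * e0).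
Proof.
rewrite /mix_loss [(1 - l01) * e0 + _]addrC [(1 - l10) * e1 + _]addrC => h0 h1.
by field; rewrite h0 h1.
Qed.

Theorem mainTheorem5 (R : realFieldType) (d : nat)
    (u0m u1m : 'rV[R]_d) (eta0m eta1m dt alpha S01 S10 : R) :
  0 < eta0m -> 0 < eta1m -> 0 < dt -> 0 <= S01 -> 0 <= S10 ->
  0 <= alpha <= 1 ->
  ((dt * S01 <= 1 /\ dt * S10 <= 1) \/ alpha = 1) ->
  let l01 := lam dt alpha S01 S10 in
  let l10 := lam dt alpha S10 S01 in
  let eta0n := (1 - l01) * eta0m + l10 * eta1m in
  let eta1n := (1 - l10) * eta1m + l01 * eta0m in
  let F0n := ((1 - l01) * eta0m) *: u0m + (l10 * eta1m) *: u1m in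
  let F1n := ((1 - l10) * eta1m) *: u1m + (l01 * eta0m) *: u0m in
  0 < eta0n -> 0 < eta1n ->
  let u0n := eta0n^-1 *: F0n in
  let u1n := eta1n^-1 *: F1n in
  let mu := eta0m * eta1m
              * ((1 - l01) * l01 * eta0m + (1 - l10) * l10 * eta1m)
            / ((l01 * eta0m + (1 - l10) * eta1m)
               * (l10 * eta1m + (1 - l01) * eta0m)) in
  let dK := 2^-1 * mu * sqnorm (u0m - u1m) in
  [/\ eta0n *: u0n + eta1n *: u1n = eta0m *: u0m + eta1m *: u1m,
      kinE eta0n eta1n u0n u1n = kinE eta0m eta1m u0m u1m - dK,
      0 <= dK &
      kinE eta0n eta1n u0n u1n <= kinE eta0m eta1m u0m u1m].
Proof.
move=> h0 h1 hdt h01 h10 ha hor l01 l10.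
have /andP[l01a l01b] : 0 <= l01 <= 1.
  by apply: lam_bounds => //; case: hor => [[]|]; auto.
have /andP[l10a l10b] : 0 <= l10 <= 1.
  by apply: lam_bounds => //; case: hor => [[]|]; auto.
clearbody l01 l10.
move=> eta0n eta1n F0n F1n hn0 hn1 u0n u1n mu dK.
have n0 : eta0n != 0 by rewrite gt_eqF.
have n1 : eta1n != 0 by rewrite gt_eqF.
have hmu : mu = mix_loss ((1 - l01) * eta0m) (l10 * eta1m)
              + mix_loss ((1 - l10) * eta1m) (l01 * eta0m) by exact: mu_split.
have hdK : 0 <= dK.
  rewrite /dK hmu; apply: mulr_ge0; last exact: sqnorm_ge0.
  apply: mulr_ge0; first by rewrite invr_ge0.
  by apply: addr_ge0; apply: mix_loss_ge0; apply: mulr_ge0; lra.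
have E0 := mix_energy _ _ u0m u1m n0.
have E1 := mix_energy _ _ u1m u0m n1.
have hE : kinE eta0n eta1n u0n u1n = kinE eta0m eta1m u0m u1m - dK.
  rewrite /kinE -!mulrA E0 E1 -[u1m - u0m]opprB sqnormN /dK hmu; ring.
have M0 : eta0n *: u0n = F0n by exact: mix_momentum.
have M1 : eta1n *: u1n = F1n by exact: mix_momentum.
split => //; last lra.
by rewrite M0 M1; apply/rowP => i; rewrite !mxE; ring.
Qed.
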